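(* Let $m\geq1$, $N\in(\mathbb{N}^* )^m$, let $A\subseteq\mathcal{Z}^m$ be a largely continuous precell mod $N$, $X=\widehat A$ its socle, $(\mu,\nu,\rho)$ a largely continuous presentation of $A$, and $f$ a largely continuous affine map on $A$ such that $\bar f=+\infty$ on $\partial A$. Let $(\alpha_i)_{1\leq i\leq m}\in\mathbb{Q}^m$ and $\beta\in\mathcal{Q}$ be such that $f(a)=\beta+\sum_{1\leq i\leq m}\alpha_ia_i$ on $A$, and extend $f$ to $\mathcal{Q}^m$ by this expression. For every $x\in X$ let $\hat f(x)=f(x,\mu(x))$ if $\alpha_m\geq0$, and $\hat f(x)=f(x,\nu(x))$ otherwise. Then $\hat f$ is a well-defined largely continuous affine map on $X$ with limit $+\infty$ at every point of $\partial X$, and $\min f(A)-|\alpha_m|N_m\leq\hat f(\widehat a)\leq f(a)$ for every $a\in A$.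
   Context: $\mathcal{Z}$ is a $\mathbb{Z}$-group (linearly ordered abelian group with smallest positive element $1$, $|\mathcal{Z}/n\mathcal{Z}|=n$ for all $n\geq1$), $\mathcal{Q}$ its divisible hull ($\mathbb{Q}\subseteq\mathcal{Q}$), $\Gamma=\mathcal{Z}\cup\{+\infty\}$, $\Omega=\mathcal{Q}\cup\{+\infty\}$, $+\infty$ maximal and absorbing for $+$; $|a|=\max(a,-a)$. Topology on $\Omega$ generated by open intervals and $]a,+\infty]$; product topology on $\Omega^m$; $\overline A$ closure; frontier $\partial A$ = closure of $\overline A\setminus A$. Socle $\widehat a=(a_1,\dots,a_{m-1})$, $\widehat A$; $\widehat N=(N_1,\dots,N_{m-1})$. $F_I(\Gamma^m)$: points whose non-$+\infty$ coordinates are exactly those in $I$. Congruence: $a\equiv b\,[n]$ iff $a-b\in n\mathcal{Z}$, and $a\equiv+\infty\,[n]$ always. For $Y\subseteq F_K(\Gamma^k)$, $g:Y\to\Omega$ is affine if constantly $+\infty$ or $g(y)=\alpha_0+\sum_{i\in K}\alpha_iy_i$ ($\alpha_0\in\mathcal{Q}$, $\alpha_i\in\mathbb{Q}$); largely continuous if it extends to a continuous $\bar g$ on $\overline Y$. Largely continuous precells mod $N$: $\Gamma^0$ for $m=0$; for $m\geq1$, $A\subseteq F_I(\Gamma^m)$ such that $\widehat A$ is a largely continuous precell mod $\widehat N$ and for some non-negative largely continuous affine $\mu,\nu:\widehat A\to\Omega$ and integer $0\leq\rho<N_m$ (a largely continuous presentation), $A=\{a\in F_I(\Gamma^m):\widehat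 a\in\widehat A,\ \mu(\widehat a)\leq a_m\leq\nu(\widehat a),\ a_m\equiv\rho\,[N_m]\}$. *)

From mathcomp Require Import all_boot all_order all_algebra.
Set Implicit Arguments. Unset Strict Implicit. Unset Printing Implicit Defensive.
Import Order.TTheory GRing.Theory Num.Theory.
Local Open Scope ring_scope.

(* A Z-group Z together with its divisible hull Q.                           *)
(* (the copy of the rational 1 in Q; rationals q are q *: zone).              *)
Record zgroup := ZGroup {
  zQ : lmodType rat;
  zle : rel zQ;
  zZ : pred zQ;
  zone : zQ;
  zle_refl : reflexive zle;
  zle_anti : antisymmetric zle;
  zle_trans : transitive zle;
  zle_total : total zle;
  zle_add : forall x y z, zle x y -> zle (x + z) (y + z);
  zZ0 : zZ 0;
  zZ_sub : forall x y, zZ x -> zZ y -> zZ (x - y);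
  zZ_one : zZ zone;
  zone_pos : zle 0 zone /\ zone != 0;
  zone_min : forall z, zZ z -> zle 0 z -> z != 0 -> zle zone z;
  (* |Z / nZ| = n : k |-> class of k*1 is a bijection from {0..n-1} to Z/nZ *)
  zZ_mod : forall n : nat, (0 < n)%N -> forall z, zZ z ->
      exists! k : 'I_n, exists w, zZ w /\ z = (k%:R : rat) *: zone + (n%:R : rat) *: w;
  zhull : forall x : zQ, exists n : nat, (0 < n)%N /\ zZ ((n%:R : rat) *: x)
}.

Section Defs.
Context (G : zgroup).
Local Notation Q := (zQ G).

(* Omega = Q u {+oo}, with None = +oo *)
Definition Omega := option Q.

Definition zlt (x y : Q) : bool := zle x y && (x != y).

Definition leO (x y : Omega) : Prop :=
  match x, y with
  | _, None => True
  | None, Some _ => False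
  | Some a, Some b => zle a b
  end.
Definition ltO (x y : Omega) : Prop :=
  match x, y with
  | None, _ => False
  | Some _, None => True
  | Some a, Some b => zlt a b
  end.

Definition oval (x : Omega) : Q := odflt 0 x.

(* congruence mod n; a == +oo [n] always *)
Definition congr (x y : Omega) (n : nat) : Prop :=
  match x, y with
  | Some a, Some b => exists w, @zZ G w /\ a - b = (n%:R : rat) *: w
  | _, _ => True
  end.

(* basic open set of Omega: ]l, u[ (u = Some b) or ]l, +oo] (u = None) *)
Definition inb (l : Q) (u : option Q) (z : Omega) : Prop :=
  match z with
  | None => u = None
  | Some q => zlt l q /\ (if u is Some b then zlt q b else True)
  end.

Definition openO (V : Omega -> Prop) : Prop :=
  forall z, V z -> exists l u, inb l u z /\ forall w, inb l u w -> V w.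

Definition openk (k : nat) (U : ('I_k -> Omega) -> Prop) : Prop :=
  forall x, U x -> exists (l : 'I_k -> Q) (u : 'I_k -> option Q),
    (forall i, inb (l i) (u i) (x i)) /\
    (forall y, (forall i, inb (l i) (u i) (y i)) -> U y).

Definition closure (k : nat) (Y : ('I_k -> Omega) -> Prop) (x : 'I_k -> Omega) : Prop :=
  forall U, openk U -> U x -> exists y, U y /\ Y y.

Definition frontier (k : nat) (Y : ('I_k -> Omega) -> Prop) : ('I_k -> Omega) -> Prop :=
  closure (fun x => closure Y x /\ ~ Y x).

Definition cont_on (k : nat) (S : ('I_k -> Omega) -> Prop) (g : ('I_k -> Omega) -> Omega) : Prop :=
  forall x, S x -> forall V, openO V -> V (g x) ->
    exists U, openk U /\ U x /\ forall y, U y -> S y -> V (g y).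

Definition lc_ext (k : nat) (Y : ('I_k -> Omega) -> Prop) (g gbar : ('I_k -> Omega) -> Omega) : Prop :=
  (forall y, Y y -> gbar y = g y) /\ cont_on (closure Y) gbar.

Definition lc (k : nat) (Y : ('I_k -> Omega) -> Prop) (g : ('I_k -> Omega) -> Omega) : Prop :=
  exists gbar, lc_ext Y g gbar.

(* F_I(Gamma^k): coordinates in I are in Z, the others are +oo *)
Definition inF (k : nat) (I : {set 'I_k}) (a : 'I_k -> Omega) : Prop :=
  forall i, if i \in I then exists z, @zZ G z /\ a i = Some z else a i = None.

Definition is_affine (k : nat) (K : {set 'I_k}) (Y : ('I_k -> Omega) -> Prop)
    (g : ('I_k -> Omega) -> Omega) : Prop :=
  (forall y, Y y -> g y = None) \/
  exists (a0 : Q) (al : 'I_k -> rat),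
    forall y, Y y -> g y = Some (a0 + \sum_(i in K) al i *: oval (y i)).

Definition nonneg (k : nat) (Y : ('I_k -> Omega) -> Prop) (g : ('I_k -> Omega) -> Omega) : Prop :=
  forall y, Y y -> leO (Some 0) (g y).

Definition socle (T : Type) (n : nat) (a : 'I_n.+1 -> T) : 'I_n -> T :=
  fun i => a (widen_ord (leqnSn n) i).
Definition socleI (n : nat) (I : {set 'I_n.+1}) : {set 'I_n} :=
  [set i : 'I_n | widen_ord (leqnSn n) i \in I].
Definition socleS (n : nat) (A : ('I_n.+1 -> Omega) -> Prop) : ('I_n -> Omega) -> Prop :=
  fun x => exists a, A a /\ forall i, socle a i = x i.

Definition extend (T : Type) (n : nat) (x : 'I_n -> T) (t : T) : 'I_n.+1 -> T :=
  fun i => match unlift ord_max i with Some j => x j | None => t end.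

Definition lc_pres (n : nat) (N : 'I_n.+1 -> nat) (I : {set 'I_n.+1})
    (A : ('I_n.+1 -> Omega) -> Prop) (mu nu : ('I_n -> Omega) -> Omega) (rho : nat) : Prop :=
  [/\ is_affine (socleI I) (socleS A) mu, is_affine (socleI I) (socleS A) nu,
      [/\ nonneg (socleS A) mu, nonneg (socleS A) nu,
          lc (socleS A) mu & lc (socleS A) nu],
      (rho < N ord_max)%N &
      forall a, A a <-> [/\ inF I a, socleS A (socle a),
                           leO (mu (socle a)) (a ord_max),
                           leO (a ord_max) (nu (socle a)) &
                           congr (a ord_max) (Some ((rho%:R : rat) *: zone G)) (N ord_max)]].

Fixpoint lc_precell (m : nat) : ('I_m -> nat) -> {set 'I_m} -> (('I_m -> Omega) -> Prop) -> Prop :=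
  match m with
  | 0 => fun _ _ A => forall a, A a
  | n.+1 => fun N I A =>
      lc_precell (socle N) (socleI I) (socleS A) /\
      exists mu nu rho, lc_pres N I A mu nu rho
  end.

Definition affQ (k : nat) (beta : Q) (alpha : 'I_k -> rat) (x : 'I_k -> Q) : Q :=
  beta + \sum_(i < k) alpha i *: x i.

(* hat f (x) = f(x, mu x) if alpha_m >= 0, f(x, nu x) otherwise;
   None (= +oo) when the chosen bound is +oo (not well-defined case) *)
Definition fhat (n : nat) (beta : Q) (alpha : 'I_n.+1 -> rat)
    (mu nu : ('I_n -> Omega) -> Omega) (x : 'I_n -> Omega) : Omega :=
  match (if 0 <= alpha ord_max then mu x else nu x) with
  | Some t => Some (affQ beta alpha (extend (fun i => oval (x i)) t))
  | None => None
  end.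

End Defs.

(* Above a point x of the socle X, the cell A consists of the integers t of a
   fixed residue class mod N_m between mu(x) and nu(x), and f(x, t) is affine
   in t with slope alpha_m. So f decreases towards the bound mu(x) (or nu(x)
   when alpha_m < 0), and hat f(x) is f evaluated at that bound; the fibre
   contains a point within N_m of it, whence the two inequalities. The bound is
   finite: otherwise f would take arbitrarily small values near the point
   (x, +oo), which lies outside A, where f tends to +oo. For the limit at a
   frontier point x of X: near x the bound stays near its continuous extension
   at x (or near +oo), hence the fibre points used above stay near finitely
   many points (x, t_j) outside A, near each of which f is large. Finally X
   consists of integer points, hence is discrete, so hat f extends
   continuously to the closure of X by +oo. *)

From Pilot Require Import Defs.
From mathcomp Require Import all_boot all_order all_algebra.
From Stdlib Require Import Classical FunctionalExtensionality ClassicalEpsilon.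
Set Implicit Arguments. Unset Strict Implicit. Unset Printing Implicit Defensive.
Import Order.TTheory GRing.Theory Num.Theory.
Local Open Scope ring_scope.

Section OrderedHull.
Variable G : zgroup.
Local Notation Q := (zQ G).
Local Notation le := (@zle G).
Local Notation lt := (@zlt G).
Local Notation one := (zone G).
Local Notation isZ := (@zZ G).

Lemma zleD2r (x y z : Q) : le (x + z) (y + z) = le x y.
Proof.
apply/idP/idP => h; last exact: zle_add.
by have := zle_add (- z) h; rewrite !addrK.
Qed.

Lemma zleD2l (x y z : Q) : le (z + x) (z + y) = le x y.
Proof. by rewrite ![z + _]addrC zleD2r. Qed.

Lemma zsubr_ge0 (x y : Q) : le 0 (y - x) = le x y.
Proof. by rewrite -(zleD2r _ _ x) add0r subrK. Qed.

Lemma zleN2 (x y : Q) : le (- x) (- y) = le y x.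
Proof. by rewrite -zsubr_ge0 opprK addrC zsubr_ge0. Qed.

Lemma zleD (a b c d : Q) : le a b -> le c d -> le (a + c) (b + d).
Proof.
move=> hab hcd; apply: (@zle_trans _ (b + c)); first by rewrite zleD2r.
by rewrite zleD2l.
Qed.

Lemma zleBlDl (x y z : Q) : le (x - y) z = le x (y + z).
Proof. by rewrite -(zleD2r _ _ y) subrK addrC. Qed.

Lemma zleBrDr (x y z : Q) : le x (y - z) = le (x + z) y.
Proof. by rewrite -(zleD2r _ _ z) subrK. Qed.

Lemma zleDr (x y : Q) : le 0 y -> le x (x + y).
Proof. by move=> hy; rewrite -{1}(addr0 x) zleD2l. Qed.

Lemma zleBr (x y : Q) : le 0 y -> le (x - y) x.
Proof. by move=> hy; rewrite zleBlDl addrC; apply: zleDr. Qed.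

Lemma zltNge (x y : Q) : lt x y = ~~ le y x.
Proof.
rewrite /zlt; case hyx: (le y x) => /=.
  by case hxy: (le x y) => //=; rewrite (@zle_anti _ x y) ?hxy ?hyx ?eqxx.
have := zle_total x y; rewrite hyx orbF => -> /=.
by apply/eqP => exy; move: hyx; rewrite exy zle_refl.
Qed.

Lemma zltW (x y : Q) : lt x y -> le x y.
Proof. by case/andP. Qed.

Lemma zlt_le_trans (x y z : Q) : lt x y -> le y z -> lt x z.
Proof.
rewrite !zltNge => hxy hyz; apply/negP => hzx; move/negP: hxy; apply.
exact: zle_trans hyz hzx.
Qed.

Lemma zle_lt_trans (x y z : Q) : le x y -> lt y z -> lt x z.
Proof.
rewrite !zltNge => hxy hyz; apply/negP => hzx; move/negP: hyz; apply.
exact: zle_trans hzx hxy.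
Qed.

Lemma zltD2r (x y z : Q) : lt (x + z) (y + z) = lt x y.
Proof. by rewrite !zltNge zleD2r. Qed.

Lemma zsubr_gt0 (x y : Q) : lt 0 (y - x) = lt x y.
Proof. by rewrite !zltNge -(zleD2r _ 0 x) subrK add0r. Qed.

Lemma zltBlDl (x y z : Q) : lt (x - y) z = lt x (y + z).
Proof. by rewrite -(zltD2r _ _ y) subrK addrC. Qed.

Lemma zltBrDr (x y z : Q) : lt x (y - z) = lt (x + z) y.
Proof. by rewrite -(zltD2r _ _ z) subrK. Qed.

Lemma zmulrn_ge0 (x : Q) k : le 0 x -> le 0 (x *+ k).
Proof.
move=> hx; elim: k => [|k ihk]; first by rewrite mulr0n zle_refl.
by rewrite mulrSr -(addr0 0); apply: zleD.
Qed.

Lemma zscale_ge0 (q : rat) (x : Q) : 0 <= q -> le 0 x -> le 0 (q *: x).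
Proof.
move=> hq hx; rewrite -[q]divq_num_den.
have := numq_ge0 q; rewrite hq; case: (numq q) => // a _.
have := denq_gt0 q; case: (denq q) => // b; rewrite ltz_nat => hb.
rewrite -scalerA -[((Posz a)%:~R : rat)]pmulrn scaler_nat; apply: zmulrn_ge0.
set y := _ *: x.
have ybx : y *+ b = x.
  by rewrite /y -scaler_nat scalerA -[(b%:~R : rat)]pmulrn mulfV ?scale1r
    // pnatr_eq0 -lt0n.
case/orP: (zle_total 0 y) => // hy0.
have hx0 : le x 0.
  by rewrite -ybx -zleN2 oppr0 -mulNrn; apply: zmulrn_ge0; rewrite -oppr0 zleN2.
have x0 : x = 0 by apply: zle_anti; rewrite hx0 hx.
suff -> : y = 0 by apply: zle_refl.
by rewrite /y x0 scaler0.
Qed.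

Lemma zleZ2l (q : rat) (x y : Q) : 0 <= q -> le x y -> le (q *: x) (q *: y).
Proof.
by move=> hq hxy; rewrite -zsubr_ge0 -scalerBr; apply: zscale_ge0; rewrite // zsubr_ge0.
Qed.

Lemma zleZ2l_npos (q : rat) (x y : Q) : q <= 0 -> le x y -> le (q *: y) (q *: x).
Proof.
by move=> hq hxy; rewrite -zleN2 -!scaleNr; apply: zleZ2l; rewrite ?oppr_ge0.
Qed.

Lemma zleZ2r (p q : rat) (x : Q) : p <= q -> le 0 x -> le (p *: x) (q *: x).
Proof.
by move=> hpq hx; rewrite -zsubr_ge0 -scalerBl; apply: zscale_ge0; rewrite // subr_ge0.
Qed.

Lemma zscale_gt0 (q : rat) (x : Q) : 0 < q -> lt 0 x -> lt 0 (q *: x).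
Proof.
move=> hq /andP[hx nx]; rewrite /zlt zscale_ge0 ?(ltW hq) //=.
by rewrite eq_sym scaler_eq0 negb_or (gt_eqF hq) eq_sym nx.
Qed.

Lemma zltZ2l (q : rat) (x y : Q) : 0 < q -> lt x y -> lt (q *: x) (q *: y).
Proof.
by move=> hq hxy; rewrite -zsubr_gt0 -scalerBr; apply: zscale_gt0; rewrite // zsubr_gt0.
Qed.

Lemma zltZ2r (p q : rat) (x : Q) : p < q -> lt 0 x -> lt (p *: x) (q *: x).
Proof.
by move=> hpq hx; rewrite -zsubr_gt0 -scalerBl; apply: zscale_gt0; rewrite // subr_gt0.
Qed.

Lemma zleZ_dist (q : rat) (x y d : Q) :
  le (y - d) x -> le x (y + d) -> le (q *: x) (q *: y + `|q| *: d).
Proof.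
move=> hlo hhi; rewrite -zleBlDl -scalerBr.
have [hq|hq] := lerP 0 q.
  by rewrite ger0_norm //; apply: zleZ2l; rewrite // zleBlDl.
rewrite ltr0_norm // -[q *: _]opprK -scaleNr -scalerN opprB.
by apply: zleZ2l; rewrite ?oppr_ge0 ?(ltW hq) // zleBlDl addrC -zleBlDl.
Qed.

Lemma zone_gt0 : lt 0 one.
Proof. by case: (zone_pos G) => h1 h2; rewrite /zlt h1 eq_sym. Qed.

Lemma znat_ge0 (k : nat) : le 0 ((k%:R : rat) *: one).
Proof. by apply: zscale_ge0 => //; apply: zltW zone_gt0. Qed.

Lemma zZ_opp (x : Q) : isZ x -> isZ (- x).
Proof. by move=> hx; rewrite -sub0r; apply: zZ_sub => //; apply: zZ0. Qed.

Lemma zZ_add (x y : Q) : isZ x -> isZ y -> isZ (x + y).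
Proof. by move=> hx hy; rewrite -[y]opprK; apply: zZ_sub => //; apply: zZ_opp. Qed.

Lemma zZ_natscale (x : Q) (k : nat) : isZ x -> isZ ((k%:R : rat) *: x).
Proof.
move=> hx; rewrite scaler_nat; elim: k => [|k ihk]; first by rewrite mulr0n zZ0.
by rewrite mulrSr; apply: zZ_add.
Qed.

Lemma zZ_nat (k : nat) : isZ ((k%:R : rat) *: one).
Proof. exact/zZ_natscale/zZ_one. Qed.

Lemma zZ_ge1 (d : Q) : isZ d -> lt 0 d -> le one d.
Proof. by move=> hd /andP[h1 h2]; apply: zone_min => //; rewrite eq_sym. Qed.

Lemma zZ_ge0 (d : Q) : isZ d -> lt (- one) d -> le 0 d.
Proof.
move=> hd hd1; have : le one (d + one).
  by apply: zZ_ge1; [apply: zZ_add hd (zZ_one G) | rewrite -(addNr one) zltD2r].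
by rewrite -{1}(add0r one) zleD2r.
Qed.

Lemma zZ_lt1 (d : Q) : isZ d -> le 0 d -> lt d one -> d = 0.
Proof.
move=> hd hd0 hd1; case: (eqVneq d 0) => // dn.
have : le one d by apply: zZ_ge1; rewrite // /zlt hd0 eq_sym dn.
by move: hd1; rewrite zltNge => /negP.
Qed.

Lemma zZ_nat_lt (d : Q) (K : nat) : isZ d -> le 0 d -> lt d ((K%:R : rat) *: one) ->
  exists2 j : nat, (j < K)%N & d = (j%:R : rat) *: one.
Proof.
move=> hd hd0; elim: K => [|K ihK] hdK; first by move: hdK; rewrite scale0r zltNge hd0.
case hK: (lt d ((K%:R : rat) *: one)).
  by case: (ihK hK) => j hj ->; exists j => //; apply: ltnW.
exists K => //; apply/eqP; rewrite -subr_eq0; apply/eqP/zZ_lt1.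
- exact/zZ_sub/zZ_nat.
- by rewrite zsubr_ge0 -[le _ _]negbK -zltNge hK.
- by rewrite zltBlDl; move: hdK; rewrite -natr1 scalerDl scale1r.
Qed.

Lemma zfloor (q : Q) : exists w, [/\ isZ w, le w q & lt q (w + one)].
Proof.
case: (zhull q) => n [hn hz].
case: (zZ_mod hn hz) => k [[w [hw e]] _].
have eq_q : q = ((k%:R / n%:R : rat) *: one) + w.
  apply: (@scalerI _ _ (n%:R : rat)); first by rewrite pnatr_eq0 -lt0n.
  by rewrite e scalerDr scalerA mulrC divfK ?pnatr_eq0 -?lt0n.
have hk0 : 0 <= (k%:R / n%:R : rat) by rewrite divr_ge0.
have hk1 : (k%:R / n%:R : rat) < 1 by rewrite ltr_pdivrMr ?ltr0n // mul1r ltr_nat.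
exists w; split => //.
- by rewrite eq_q -{1}(add0r w) zleD2r; apply: zscale_ge0 => //; apply: zltW zone_gt0.
- by rewrite eq_q (addrC w) zltD2r -{2}(scale1r one); apply: zltZ2r => //; apply: zone_gt0.
Qed.

Lemma zZ_above (q : Q) : exists w, [/\ isZ w, lt q w & le 0 w].
Proof.
case: (zfloor q) => w [hw hwq hqw].
case hw1: (le 0 (w + one)).
  by exists (w + one); split => //; apply: zZ_add hw (zZ_one G).
exists 0; split; [exact: zZ0 | | exact: zle_refl].
by apply: zlt_le_trans hqw _; have := zle_total 0 (w + one); rewrite hw1.
Qed.

Lemma zZ_divfloor (N : nat) (d : Q) : (0 < N)%N -> le 0 d ->
  exists w, [/\ isZ w, le 0 w, le ((N%:R : rat) *: w) d
              & lt d ((N%:R : rat) *: w + (N%:R : rat) *: one)].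
Proof.
move=> hN hd; have hN0 : 0 < (N%:R : rat) by rewrite ltr0n.
case: (zfloor ((N%:R : rat)^-1 *: d)) => w [hw hwd hdw].
have hq : (N%:R : rat) *: ((N%:R : rat)^-1 *: d) = d.
  by rewrite scalerA mulfV ?scale1r // gt_eqF.
have hd' : le 0 ((N%:R : rat)^-1 *: d) by apply: zscale_ge0; rewrite // invr_ge0 ltW.
exists w; split => //.
- by apply: zZ_ge0 => //; rewrite -(zltD2r _ _ one) addNr; apply: zle_lt_trans hd' hdw.
- by rewrite -[X in le _ X]hq; apply: zleZ2l; rewrite // ltW.
- by rewrite -[X in lt X _]hq -scalerDr; apply: zltZ2l.
Qed.

Lemma zZ_gap (x z : Q) : isZ x -> isZ z -> lt x z -> lt z (x + one) -> False.
Proof.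
move=> hx hz hxz hzx.
have : z - x = 0.
  apply: zZ_lt1; [exact: zZ_sub | rewrite zsubr_ge0; exact: zltW | by rewrite zltBlDl].
by move/eqP; rewrite subr_eq0 => /eqP ezx; move: hxz; rewrite ezx /zlt eqxx andbF.
Qed.

Lemma zZ_window (sig : Q) (M : nat) : exists b0, forall t, isZ t ->
  lt (sig - (M%:R : rat) *: one) t -> lt t (sig + (M%:R : rat) *: one) ->
  exists2 j, (j < M.*2)%N & t = b0 + (j%:R : rat) *: one.
Proof.
case: (zfloor sig) => w [hw hws hsw]; set Mq := (M%:R : rat) *: one.
have hb0 : isZ (w + one - Mq) by apply/zZ_sub/zZ_nat; apply/zZ_add/zZ_one.
exists (w + one - Mq) => t ht hlo hhi.
have [j hj ej] : exists2 j, (j < M.*2)%N & t - (w + one - Mq) = (j%:R : rat) *: one.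
  apply: zZ_nat_lt; first exact: zZ_sub.
    apply: zZ_ge0; first exact: zZ_sub.
    rewrite zltBrDr addrA addrCA addNr addr0; apply: zle_lt_trans hlo.
    by rewrite zleD2r.
  rewrite zltBlDl -addnn natrD scalerDl -addrA addKr.
  by apply: zlt_le_trans hhi _; rewrite zleD2r zltW.
by exists j => //; rewrite -ej addrCA subrr addr0.
Qed.

End OrderedHull.

Lemma widen_ord_lift n (i : 'I_n) : widen_ord (leqnSn n) i = lift ord_max i.
Proof. by apply: val_inj; rewrite /= /bump leqNgt ltn_ord. Qed.

Lemma extend_widen T n (x : 'I_n -> T) t i : extend x t (widen_ord (leqnSn n) i) = x i.
Proof. by rewrite /extend widen_ord_lift liftK. Qed.

Lemma extend_max T n (x : 'I_n -> T) t : extend x t ord_max = t.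
Proof. by rewrite /extend unlift_none. Qed.

Lemma socle_extend T n (x : 'I_n -> T) t : socle (extend x t) = x.
Proof. by apply: functional_extensionality => i; apply: extend_widen. Qed.

Lemma extend_socle T n (a : 'I_n.+1 -> T) : extend (socle a) (a ord_max) = a.
Proof.
apply: functional_extensionality => i; rewrite /extend.
by case: unliftP => [j ->|->] //; rewrite /socle widen_ord_lift.
Qed.

Lemma extend_comp T U n (g : T -> U) (x : 'I_n -> T) t :
  (fun i => g (extend x t i)) = extend (fun j => g (x j)) (g t).
Proof. by apply: functional_extensionality => i; rewrite /extend; case: unlift. Qed.

Section OmegaTopology.
Variable G : zgroup.
Local Notation Q := (zQ G).
Local Notation le := (@zle G).
Local Notation lt := (@zlt G).
Local Notation one := (zone G).
Local Notation isZ := (@zZ G).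
Local Notation Om := (Omega G).
Local Notation closure := Defs.closure.

Definition box k (l : 'I_k -> Q) (u : 'I_k -> option Q) (y : 'I_k -> Om) : Prop :=
  forall i, inb (l i) (u i) (y i).

Definition int_point k (x : 'I_k -> Om) : Prop :=
  forall i, exists z, isZ z /\ x i = Some z.

Lemma openk_box k l u : openk (@box k l u).
Proof. by move=> x hx; exists l, u. Qed.

Lemma openO_inb l u : openO (@inb G l u).
Proof. by move=> z hz; exists l, u. Qed.

Lemma inb_unit (q : Q) : inb (q - one) (Some (q + one)) (Some q).
Proof.
split; first by rewrite zltBlDl -zsubr_gt0 addrK zone_gt0.
by rewrite -zsubr_gt0 addrAC subrr add0r zone_gt0.
Qed.

Definition zmax (a b : Q) := if le a b then b else a.
Definition zmin (a b : Q) := if le a b then a else b.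
Definition omin (u v : option Q) :=
  match u, v with
  | None, _ => v
  | _, None => u
  | Some a, Some b => Some (zmin a b)
  end.

Lemma zlt_max a b q : lt (zmax a b) q <-> lt a q /\ lt b q.
Proof.
rewrite /zmax; have := zle_total a b.
case hab: (le a b) => /= hba; split=> [h|[]//]; split => //.
- exact: zle_lt_trans hab h.
- exact: zle_lt_trans hba h.
Qed.

Lemma zlt_min a b q : lt q (zmin a b) <-> lt q a /\ lt q b.
Proof.
rewrite /zmin; have := zle_total a b.
case hab: (le a b) => /= hba; split=> [h|[]//]; split => //.
- exact: zlt_le_trans h hab.
- exact: zlt_le_trans h hba.
Qed.

Lemma inbI l1 u1 l2 u2 z :
  inb (zmax l1 l2) (omin u1 u2) z <-> inb l1 u1 z /\ inb l2 u2 z.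
Proof.
case: z => [q|] /=.
  by rewrite zlt_max; case: u1 => [b1|]; case: u2 => [b2|] /=; rewrite ?zlt_min; tauto.
by case: u1 => [b1|]; case: u2 => [b2|] //=; split => //; case.
Qed.

Lemma openkI k (U V : ('I_k -> Om) -> Prop) :
  openk U -> openk V -> openk (fun y => U y /\ V y).
Proof.
move=> oU oV x [Ux Vx].
case: (oU x Ux) => l1 [u1 [h1 h1']]; case: (oV x Vx) => l2 [u2 [h2 h2']].
exists (fun i => zmax (l1 i) (l2 i)), (fun i => omin (u1 i) (u2 i)).
split => [i|y hy]; first exact/inbI.
by split; [apply: h1' | apply: h2'] => i; case/inbI: (hy i).
Qed.

Lemma openkT k : openk (fun _ : 'I_k -> Om => True).
Proof.
move=> x _; exists (fun i => oval (x i) - one), (fun _ => None); split => // i.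
by case: (x i) => [q|] //=; case: (inb_unit q).
Qed.

Lemma openk_fin_inter k (x : 'I_k -> Om) (P : nat -> ('I_k -> Om) -> Prop) (K : nat) :
  (forall j, (j < K)%N -> exists U, [/\ openk U, U x & forall y, U y -> P j y]) ->
  exists U, [/\ openk U, U x & forall y, U y -> forall j, (j < K)%N -> P j y].
Proof.
elim: K => [|K ihK] hP; first by exists (fun _ => True); split => //; apply: openkT.
case: ihK => [j hj|U [oU Ux hU]]; first by apply: hP; apply: ltnW.
case: (hP K (ltnSn K)) => V [oV Vx hV].
exists (fun y => U y /\ V y); split => //; first exact: openkI.
move=> y [Uy Vy] j; rewrite ltnS leq_eqVlt => /orP[/eqP ->|hj]; [exact: hV | exact: hU].
Qed.

Lemma openk_extend_box n (W : ('I_n.+1 -> Om) -> Prop) (x : 'I_n -> Om) tau :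
  openk W -> W (extend x tau) ->
  exists U l u, [/\ openk U, U x, inb l u tau &
    forall y t, U y -> inb l u t -> W (extend y t)].
Proof.
move=> oW Wx; case: (oW _ Wx) => l [u [hin hW]].
exists (box (socle l) (socle u)), (l ord_max), (u ord_max); split.
- exact: openk_box.
- by move=> i; have := hin (widen_ord (leqnSn n) i); rewrite extend_widen.
- by have := hin ord_max; rewrite extend_max.
move=> y t Uy ht; apply: hW => i; rewrite /extend.
by case: unliftP => [j ->|->] //; have := Uy j; rewrite /socle widen_ord_lift.
Qed.

Lemma closure_sub k (Y : ('I_k -> Om) -> Prop) y : Y y -> closure Y y.
Proof. by move=> hy U _ Uy; exists y. Qed.

Lemma frontier_closure k (Y : ('I_k -> Om) -> Prop) x : frontier Y x -> closure Y x.
Proof. by move=> hx U oU Ux; case: (hx U oU Ux) => y [Uy [cy _]]; apply: cy. Qed.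

Lemma not_closure_nbhs k (Y : ('I_k -> Om) -> Prop) p :
  ~ closure Y p -> exists U, [/\ openk U, U p & forall y, U y -> ~ Y y].
Proof.
move=> hp; apply: NNPP => hU; apply: hp => U oU Up.
by apply: NNPP => hY; apply: hU; exists U; split => // y Uy Yy; apply: hY; exists y.
Qed.

(* Two distinct integers are at distance at least one, so a box of width
   one around each coordinate of x, shrunk on the side of a competitor,
   separates x from the rest of S. *)
Lemma closure_int_isolated k (S : ('I_k -> Om) -> Prop) (x : 'I_k -> Om) :
  (forall y, S y -> int_point y) -> int_point x ->
  exists U, [/\ openk U, U x & forall y, U y -> closure S y -> y = x].
Proof.
move=> hS hx.
exists (box (fun i => oval (x i) - one) (fun i => Some (oval (x i) + one))).
split; [exact: openk_box | by move=> i; case: (hx i) => z [_ ->]; apply: inb_unit |].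
move=> y Uy cy; apply: functional_extensionality => i; apply: NNPP => yxi.
case: (hx i) => z [hz exi].
case eyi: (y i) => [q|]; last by have := Uy i; rewrite eyi exi.
have [hq1 hq2] : lt (z - one) q /\ lt q (z + one) by have := Uy i; rewrite exi eyi.
have nqz : q != z by apply/eqP => eqz; apply: yxi; rewrite eyi eqz.
have [lo [hi [hlo hhi hgap]]] : exists lo hi, [/\ lt lo q, lt q hi &
    forall w, isZ w -> lt lo w -> lt w hi -> False].
  case hzq: (le z q).
    exists z, (z + one); split => // [|w hw]; last exact: zZ_gap.
    by rewrite /zlt hzq eq_sym.
  exists (z - one), z; split => // [|w hw h1 h2]; first by rewrite zltNge hzq.
  by apply: (zZ_gap (zZ_sub hz (zZ_one G)) hw h1); rewrite subrK.
pose V := box (fun j => if j == i then lo else oval (x j) - one)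
              (fun j => if j == i then Some hi else Some (oval (x j) + one)).
have oV : openk V by apply: openk_box.
have [|w [Vw Sw]] := cy V oV.
  by move=> j; rewrite /V; case: (eqVneq j i) => [->|_]; [rewrite eyi | apply: Uy].
case: (hS w Sw i) => wi [hwi ewi].
by have := Vw i; rewrite eqxx ewi /= => -[]; apply: hgap.
Qed.

Lemma frontier_int_notin k (S : ('I_k -> Om) -> Prop) x :
  (forall y, S y -> int_point y) -> frontier S x -> ~ S x.
Proof.
move=> hS hx Sx; case: (closure_int_isolated hS (hS x Sx)) => U [oU Ux hU].
case: (hx U oU Ux) => y [Uy [cy nSy]].
by apply: nSy; rewrite (hU y Uy cy).
Qed.

(* A point outside A lies either outside its closure or on its frontier,
   where fbar = +oo. *)
Lemma lc_ext_big_off k (A : ('I_k -> Om) -> Prop) f fbar p c :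
  lc_ext A f fbar -> (forall x, frontier A x -> fbar x = None) -> ~ A p ->
  exists W, [/\ openk W, W p & forall y, W y -> A y -> ltO (Some c) (f y)].
Proof.
move=> [fbarE fbar_cont] fbar_fr nAp.
case: (classic (closure A p)) => cp; last first.
  case: (not_closure_nbhs cp) => W [oW Wp hW].
  by exists W; split => // y Wy Ay; case: (hW y Wy).
have fbp : fbar p = None by apply/fbar_fr/closure_sub.
case: (fbar_cont _ cp _ (@openO_inb c None)); first by rewrite fbp.
move=> W [oW [Wp hW]]; exists W; split => // y Wy Ay.
by have := hW y Wy (closure_sub Ay); rewrite fbarE //; case: (f y) => [v|] //= [].
Qed.

End OmegaTopology.

Section HatF.
Variables (G : zgroup) (n : nat) (N : 'I_n.+1 -> nat)
  (A : ('I_n.+1 -> Omega G) -> Prop) (mu nu : ('I_n -> Omega G) -> Omega G) (rho : nat).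
Hypothesis N_gt0 : (0 < N ord_max)%N.
Hypothesis A_int : forall a, A a -> int_point a.
Hypothesis A_pres : lc_pres N [set: 'I_n.+1] A mu nu rho.

Local Notation Q := (zQ G).
Local Notation le := (@zle G).
Local Notation lt := (@zlt G).
Local Notation one := (zone G).
Local Notation isZ := (@zZ G).
Local Notation X := (socleS A).
Local Notation Nq := ((N ord_max)%:R : rat).
Local Notation Nn := (((N ord_max)%:R : rat) *: zone G).

Definition in_class (t : Q) : Prop :=
  exists w, isZ w /\ t - (rho%:R : rat) *: one = Nq *: w.

Lemma in_classD (t w : Q) : isZ w -> in_class t -> in_class (t + Nq *: w).
Proof.
move=> hw [w0 [hw0 e0]]; exists (w0 + w); split; first exact: zZ_add.
by rewrite addrAC e0 scalerDr.
Qed.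

Lemma in_classB (t w : Q) : isZ w -> in_class t -> in_class (t - Nq *: w).
Proof. by move=> hw; rewrite -scalerN; apply/in_classD/zZ_opp. Qed.

Lemma socleSP y : X y -> exists a, A a /\ socle a = y.
Proof. by case=> a [Aa ea]; exists a; split => //; apply: functional_extensionality. Qed.

Lemma socleS_int y : X y -> int_point y.
Proof. by case/socleSP => a [Aa <-] i; apply: A_int. Qed.

Lemma socleS_extend x tau : A (extend x tau) -> X x.
Proof. by move=> Ax; exists (extend x tau); rewrite socle_extend. Qed.

Lemma fibreP y t : A (extend y t) <->
  [/\ X y, exists2 z, isZ z & t = Some z, leO (mu y) t, leO t (nu y)
    & forall z, t = Some z -> in_class z].
Proof.
split => [Ayt|[Xy [z hz ->] hmu hnu hcl]].
  case: A_pres => _ _ _ _ /(_ (extend y t)) [/(_ Ayt) [_ _]].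
  rewrite socle_extend extend_max => hmu hnu hcl _; split => //.
  - exact: socleS_extend Ayt.
  - by case: (A_int Ayt ord_max) => z [hz]; rewrite extend_max => ->; exists z.
  - by move=> z ezt; move: hcl; rewrite ezt.
case: A_pres => _ _ _ _ ->; rewrite socle_extend extend_max; split => //.
- move=> i; rewrite in_setT /extend; case: unliftP => [j _|_]; last by exists z.
  exact: socleS_int.
- exact: hcl.
Qed.

Lemma fibre_nonempty y : X y -> exists z, isZ z /\ A (extend y (Some z)).
Proof.
case/socleSP => a [Aa <-]; case: (A_int Aa ord_max) => z [hz ez].
by exists z; rewrite -ez extend_socle.
Qed.

Lemma fibre_above_mu y m : X y -> mu y = Some m ->
  exists t, [/\ isZ t, A (extend y (Some t)), le m t & lt t (m + Nn)].
Proof.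
move=> Xy emu; case: (fibre_nonempty Xy) => z [hz /fibreP [_ _ hmz hzn hcl]].
rewrite emu /= in hmz.
case: (zZ_divfloor N_gt0 (etrans (zsubr_ge0 _ _) hmz)) => w [hw hw0 hle hlt].
have hmt : le m (z - Nq *: w) by rewrite zleBrDr addrC -zleBrDr.
have htz : le (z - Nq *: w) z by apply/zleBr/zscale_ge0.
have ht : isZ (z - Nq *: w) by apply/zZ_sub/zZ_natscale.
exists (z - Nq *: w); split => //.
- apply/fibreP; split => //; first by exists (z - Nq *: w).
  + by rewrite emu.
  + by case: (nu y) hzn => [v|] //= hzv; apply: zle_trans htz hzv.
  + by move=> _ [<-]; apply/in_classB/hcl.
- by rewrite zltBlDl addrCA -zltBlDl.
Qed.

Lemma fibre_below_nu y m : X y -> nu y = Some m ->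
  exists t, [/\ isZ t, A (extend y (Some t)), lt (m - Nn) t & le t m].
Proof.
move=> Xy enu; case: (fibre_nonempty Xy) => z [hz /fibreP [_ _ hmz hzn hcl]].
rewrite enu /= in hzn.
case: (zZ_divfloor N_gt0 (etrans (zsubr_ge0 _ _) hzn)) => w [hw hw0 hle hlt].
have htm : le (z + Nq *: w) m by rewrite addrC -zleBrDr.
have hzt : le z (z + Nq *: w) by apply/zleDr/zscale_ge0.
have ht : isZ (z + Nq *: w) by apply/zZ_add/zZ_natscale.
exists (z + Nq *: w); split => //.
- apply/fibreP; split => //; first by exists (z + Nq *: w).
  + by case: (mu y) hmz => [v|] //= hvz; apply: zle_trans hvz hzt.
  + by rewrite enu.
  + by move=> _ [<-]; apply/in_classD/hcl.
- by rewrite zltBlDl addrC -addrA -zltBlDl.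
Qed.

Lemma fibre_unbounded y l : X y -> nu y = None ->
  exists t, [/\ isZ t, A (extend y (Some t)) & lt l t].
Proof.
move=> Xy enu; case: (fibre_nonempty Xy) => z [hz /fibreP [_ _ hmz _ hcl]].
case: (zZ_above (l - z)) => w [hw hlw hw0].
have hwN : le w (Nq *: w) by rewrite -{1}(scale1r w); apply: zleZ2r; rewrite ?ler1n.
have ht : isZ (z + Nq *: w) by apply/zZ_add/zZ_natscale.
exists (z + Nq *: w); split => //.
- apply/fibreP; split => //; first by exists (z + Nq *: w).
  + case: (mu y) hmz => [v|] //= hvz; apply: zle_trans hvz _.
    exact/zleDr/(zle_trans hw0).
  + by rewrite enu.
  + by move=> _ [<-]; apply/in_classD/hcl.
- by rewrite -zltBlDl; apply: zlt_le_trans hlw hwN.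
Qed.

Variables (f fbar : ('I_n.+1 -> Omega G) -> Omega G) (alpha : 'I_n.+1 -> rat) (beta : Q).
Hypothesis f_ext : lc_ext A f fbar.
Hypothesis fbar_frontier : forall x, frontier A x -> fbar x = None.
Hypothesis fE : forall a, A a -> f a = Some (affQ beta alpha (fun i => oval (a i))).

Local Notation s := (alpha ord_max).
Local Notation bnd y := (if 0 <= alpha ord_max then mu y else nu y).
Local Notation hatf := (fhat beta alpha mu nu).
Local Notation closure := Defs.closure.

Definition socle_aff (y : 'I_n -> Omega G) : Q :=
  beta + \sum_(i < n) alpha (widen_ord (leqnSn n) i) *: oval (y i).

Lemma affQ_extend (y : 'I_n -> Omega G) t :
  affQ beta alpha (extend (fun i => oval (y i)) t) = socle_aff y + s *: t.
Proof.
rewrite /affQ big_ord_recr /= extend_max addrA; congr (_ + _ + _).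
by apply: eq_bigr => i _; rewrite extend_widen.
Qed.

Lemma f_extend y t :
  A (extend y (Some t)) -> f (extend y (Some t)) = Some (socle_aff y + s *: t).
Proof. by move=> Ayt; rewrite fE // (extend_comp (@oval G)) affQ_extend. Qed.

Lemma fhatE y b : bnd y = Some b -> hatf y = Some (socle_aff y + s *: b).
Proof. by move=> eb; rewrite /fhat eb affQ_extend. Qed.

Lemma f_big_near x tau c : ~ A (extend x tau) ->
  exists U l u, [/\ openk U, U x, inb l u tau &
    forall y t, U y -> inb l u t -> A (extend y t) -> ltO (Some c) (f (extend y t))].
Proof.
move=> nA; case: (lc_ext_big_off c f_ext fbar_frontier nA) => W [oW Wx hW].
case: (openk_extend_box oW Wx) => U [l [u [oU Ux ht hU]]].
by exists U, l, u; split => // y t Uy hlt; apply/hW/hU.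
Qed.

(* If nu(y) = +oo with alpha_m < 0, then f(y, t) decreases to -oo as t grows
   in the fibre, while f must be large near the point (y, +oo) outside A. *)
Lemma bound_finite y : X y -> bnd y <> None.
Proof.
move=> Xy; case: (fibre_nonempty Xy) => z [_ /fibreP [_ _ hmz _ _]].
case: ifP => hs enu; first by move: hmz; rewrite enu.
have nA : ~ A (extend y None).
  by move=> Ay; case: (A_int Ay ord_max) => v [_]; rewrite extend_max.
case: (f_big_near (socle_aff y + s *: z) nA) => U [l [u [oU Uy hu hU]]].
case: (fibre_unbounded (zmax l z) Xy enu) => t [_ Ayt /zlt_max [hlt hzt]].
have hin : inb l u (Some t) by move: hu => /= ->.
have := hU _ _ Uy hin Ayt; rewrite f_extend //= zltNge zleD2l => /negP; apply.
by apply: zleZ2l_npos; [rewrite ltW // ltNge hs | apply: zltW].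
Qed.

Lemma fibre_near_bound y b : X y -> bnd y = Some b ->
  exists t, [/\ isZ t, A (extend y (Some t)), le (b - Nn) t & le t (b + Nn)].
Proof.
move=> Xy; case: ifP => _ eb.
  case: (fibre_above_mu Xy eb) => t [ht Ayt hbt htb]; exists t; split => //.
    by apply: zle_trans hbt; apply/zleBr/znat_ge0.
  exact: zltW.
case: (fibre_below_nu Xy eb) => t [ht Ayt hbt htb]; exists t; split => //.
  exact: zltW.
by apply: zle_trans htb _; apply/zleDr/znat_ge0.
Qed.

Lemma f_fibre_le y b t : A (extend y (Some t)) -> le (b - Nn) t -> le t (b + Nn) ->
  leO (f (extend y (Some t))) (Some (socle_aff y + s *: b + (`|s| * Nq) *: one)).
Proof.
move=> Ayt hlo hhi; rewrite f_extend //= -(addrA (socle_aff y)) zleD2l -scalerA.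
exact: zleZ_dist.
Qed.

Lemma fhat_gt y b t c : bnd y = Some b -> A (extend y (Some t)) ->
  le (b - Nn) t -> le t (b + Nn) ->
  ltO (Some (c + (`|s| * Nq) *: one)) (f (extend y (Some t))) -> ltO (Some c) (hatf y).
Proof.
move=> eb Ayt hlo hhi; have := f_fibre_le Ayt hlo hhi.
rewrite f_extend // (fhatE eb) /= => hle hlt.
by rewrite -(zltD2r _ _ ((`|s| * Nq) *: one)); apply: zlt_le_trans hlt hle.
Qed.

Lemma fhat_le_f a : A a -> leO (hatf (socle a)) (f a).
Proof.
move=> Aa; case: (A_int Aa ord_max) => z [_ ez].
have ea : a = extend (socle a) (Some z) by rewrite -ez extend_socle.
rewrite ea in Aa; rewrite {2}ea; case/fibreP: (Aa) => Xa _ hmu hnu _.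
case eb: (bnd (socle a)) => [b|]; last by case: (bound_finite Xa).
rewrite f_extend // (fhatE eb) /= zleD2l.
move: eb; case: ifP => hs eb; rewrite eb /= in hmu hnu.
  exact: zleZ2l.
by apply: zleZ2l_npos; rewrite // ltW // ltNge hs.
Qed.

Lemma fhat_ge_min a q0 : A a -> (forall a', A a' -> leO (Some q0) (f a')) ->
  leO (Some (q0 - (`|s| * Nq) *: one)) (hatf (socle a)).
Proof.
move=> Aa hmin; have Xa : X (socle a) by exists a.
case eb: (bnd (socle a)) => [b|]; last by case: (bound_finite Xa).
case: (fibre_near_bound Xa eb) => t [_ Ayt hlo hhi].
have := f_fibre_le Ayt hlo hhi; have := hmin _ Ayt.
case: (f _) => //= v hqv hv; rewrite (fhatE eb) /= zleBlDl addrC.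
exact: zle_trans hqv hv.
Qed.

Lemma bound_lc : exists bb, (forall y, X y -> bb y = bnd y) /\ cont_on (closure X) bb.
Proof.
case: A_pres => _ _ [_ _ [mb [hmb cmb]] [nb [hnb cnb]]] _ _.
by case: (0 <= s); [exists mb | exists nb].
Qed.

Section FrontierLimit.
Variables (bb : ('I_n -> Omega G) -> Omega G) (x : 'I_n -> Omega G) (c : Q).
Hypothesis bbE : forall y, X y -> bb y = bnd y.
Hypothesis bb_cont : cont_on (closure X) bb.
Hypothesis x_frontier : frontier X x.

Let c' := c + (`|s| * Nq) *: one.

Lemma notin_socleS : ~ X x.
Proof. exact: frontier_int_notin socleS_int x_frontier. Qed.

(* Near x the bound stays within one of sig, so the relevant fibre points lie
   at one of finitely many heights, and f is large near each (x, height). *)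
Lemma fhat_lim_finite sig : bb x = Some sig ->
  exists U, [/\ openk U, U x & forall y, U y -> X y -> ltO (Some c) (hatf y)].
Proof.
move=> ebx; case: (zZ_window sig (N ord_max).+1) => b0 hwin.
have hnear : forall j, (j < (N ord_max).+1.*2)%N -> exists U, [/\ openk U, U x &
    forall y, U y -> A (extend y (Some (b0 + (j%:R : rat) *: one))) ->
      ltO (Some c') (f (extend y (Some (b0 + (j%:R : rat) *: one))))].
  move=> j _; have nA : ~ A (extend x (Some (b0 + (j%:R : rat) *: one))).
    by move/socleS_extend; apply: notin_socleS.
  case: (f_big_near c' nA) => U [l [u [oU Ux hin hU]]].
  by exists U; split => // y Uy; apply: hU.
case: (openk_fin_inter hnear) => U1 [oU1 U1x hU1].
case: (bb_cont (frontier_closure x_frontier) (@openO_inb G (sig - one) (Some (sig + one)))).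
  by rewrite ebx; apply: inb_unit.
move=> U2 [oU2 [U2x hU2]].
exists (fun y => U1 y /\ U2 y); split => //; first exact: openkI.
move=> y [U1y U2y] Xy; have := hU2 y U2y (closure_sub Xy); rewrite bbE //.
case eb: (bnd y) => [b|] //= [hb1 hb2].
case: (fibre_near_bound Xy eb) => t [ht Ayt hlo hhi].
apply: (fhat_gt eb Ayt hlo hhi).
have e1 : ((N ord_max).+1%:R : rat) *: one = Nn + one by rewrite -natr1 scalerDl scale1r.
case: (hwin t ht); rewrite ?e1.
- rewrite opprD addrA addrAC; apply: zlt_le_trans _ hlo.
  by rewrite zltD2r.
- by apply: zle_lt_trans hhi _; rewrite (addrC Nn) addrA zltD2r.
by move=> j hj et; rewrite et in Ayt *; apply: hU1 y U1y j hj Ayt.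
Qed.

Lemma fhat_lim_infinite : bb x = None ->
  exists U, [/\ openk U, U x & forall y, U y -> X y -> ltO (Some c) (hatf y)].
Proof.
move=> ebx; have nA : ~ A (extend x None) by move/socleS_extend; apply: notin_socleS.
case: (f_big_near c' nA) => U1 [l [u [oU1 U1x hin hU1]]]; rewrite /= in hin; subst u.
case: (bb_cont (frontier_closure x_frontier) (@openO_inb G (l + Nn) None)).
  by rewrite ebx.
move=> U2 [oU2 [U2x hU2]].
exists (fun y => U1 y /\ U2 y); split => //; first exact: openkI.
move=> y [U1y U2y] Xy; have := hU2 y U2y (closure_sub Xy); rewrite bbE //.
case eb: (bnd y) => [b|]; last by case: (bound_finite Xy).
move=> /= [hb _]; case: (fibre_near_bound Xy eb) => t [_ Ayt hlo hhi].
apply: (fhat_gt eb Ayt hlo hhi); apply: hU1 => //; split => //.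
by apply: zlt_le_trans hlo; rewrite zltBrDr.
Qed.

End FrontierLimit.

Lemma fhat_lim x : frontier X x -> forall c, exists U,
  [/\ openk U, U x & forall y, U y -> X y -> ltO (Some c) (hatf y)].
Proof.
move=> hx c; case: bound_lc => bb [bbE bb_cont].
case ebx: (bb x) => [sig|]; first exact: (fhat_lim_finite c bbE bb_cont hx ebx).
exact: (fhat_lim_infinite c bbE bb_cont hx ebx).
Qed.

Lemma fhat_affine : is_affine [set: 'I_n] X hatf.
Proof.
have hb : (forall y, X y -> bnd y = None) \/ exists a0 al, forall y, X y ->
    bnd y = Some (a0 + \sum_(i in socleI [set: 'I_n.+1]) al i *: oval (y i)).
  by case: A_pres => hmu hnu _ _ _; case: (0 <= s); [apply: hmu | apply: hnu].
case: hb => [h|[a0 [al h]]]; first by left => y Xy; case: (bound_finite Xy); apply: h.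
right; exists (beta + s *: a0), (fun i => alpha (widen_ord (leqnSn n) i) + s * al i).
move=> y Xy; rewrite (fhatE (h y Xy)) /socle_aff; congr Some.
have eI : socleI [set: 'I_n.+1] = [set: 'I_n] by apply/setP => i; rewrite !inE.
have sumT (F : 'I_n -> Q) : \sum_(i in [set: 'I_n]) F i = \sum_(i < n) F i.
  by apply: eq_bigl => i; rewrite in_setT.
rewrite eI !sumT scalerDr scaler_sumr.
under [X in _ = _ + X]eq_bigr => i _ do rewrite scalerDl -scalerA.
by rewrite big_split /= addrACA.
Qed.

(* X consists of integer points, so it is discrete: +oo off X extends hat f
   continuously, by fhat_lim at the frontier points. *)
Lemma fhat_lc : lc X hatf.
Proof.
pose g y := if excluded_middle_informative (X y) then hatf y else None.
exists g; split => [y Xy|x cx V oV hV].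
  by rewrite /g; case: excluded_middle_informative.
case: (excluded_middle_informative (X x)) => Xx.
  case: (closure_int_isolated socleS_int (socleS_int Xx)) => U [oU Ux hU].
  by exists U; do 2!split => //; move=> y Uy cy; rewrite (hU y Uy cy).
have gx : g x = None by rewrite /g; case: excluded_middle_informative.
rewrite gx in hV; case: (oV _ hV) => l [u [/= hin hall]]; subst u.
case: (fhat_lim (closure_sub (conj cx Xx) : frontier X x) l) => U [oU Ux hU].
exists U; do 2!split => //; move=> y Uy _; apply: hall; rewrite /g.
case: excluded_middle_informative => Xy //=.
by have := hU y Uy Xy; case: (hatf y).
Qed.

End HatF.

Unset Implicit Arguments. Set Strict Implicit.

Theorem lemma4p2 (G : zgroup) (n : nat) (N : 'I_n.+1 -> nat)
    (A : ('I_n.+1 -> Omega G) -> Prop) (mu nu : ('I_n -> Omega G) -> Omega G) (rho : nat)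
    (f : ('I_n.+1 -> Omega G) -> Omega G) (alpha : 'I_n.+1 -> rat) (beta : zQ G) :
  (forall i, 0 < N i)%N ->
  (forall a, A a -> forall i, exists z, @zZ G z /\ a i = Some z) ->
  lc_precell N [set: 'I_n.+1] A ->
  lc_pres N [set: 'I_n.+1] A mu nu rho ->
  is_affine [set: 'I_n.+1] A f ->
  (exists fbar, lc_ext A f fbar /\ forall x, frontier A x -> fbar x = None) ->
  (forall a, A a -> f a = Some (affQ beta alpha (fun i => oval (a i)))) ->
  [/\ (* hat f is well defined *)
      (forall x, socleS A x ->
         if 0 <= alpha ord_max then mu x <> None else nu x <> None),
      (* hat f is a largely continuous affine map on X *)
      (is_affine [set: 'I_n] (socleS A) (fhat beta alpha mu nu) /\
       lc (socleS A) (fhat beta alpha mu nu)),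
      (* with limit +oo at every point of the frontier of X *)
      (forall x, frontier (socleS A) x -> forall c : zQ G,
         exists U, openk U /\ U x /\
           forall y, U y -> socleS A y -> ltO (Some c) (fhat beta alpha mu nu y)) &
      (* min f(A) - |alpha_m| N_m <= hat f (hat a) <= f(a) *)
      forall a, A a ->
        leO (fhat beta alpha mu nu (socle a)) (f a) /\
        (forall a0 q0, A a0 -> f a0 = Some q0 -> (forall a', A a' -> leO (Some q0) (f a')) ->
           leO (Some (q0 - ((`|alpha ord_max| * (N ord_max)%:R) *: zone G)))
               (fhat beta alpha mu nu (socle a)))].
Proof.
move=> N_gt0 A_int _ A_pres _ [fbar [f_ext fbar_fr]] fE.
have hN := N_gt0 ord_max.
split.
- by move=> x Xx; have := bound_finite hN A_int A_pres f_ext fbar_fr fE Xx; case: ifP.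
- split; first exact: (fhat_affine hN A_int A_pres f_ext fbar_fr fE).
  exact: (fhat_lc hN A_int A_pres f_ext fbar_fr fE).
- move=> x hx c; have [U [oU Ux hU]] := fhat_lim hN A_int A_pres f_ext fbar_fr fE hx c.
  by exists U.
- move=> a Aa; split; first exact: (fhat_le_f hN A_int A_pres f_ext fbar_fr fE Aa).
  by move=> a0 q0 _ _; apply: (fhat_ge_min hN A_int A_pres f_ext fbar_fr fE Aa).
Qed.
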